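(* Let $k$ be a positive integer. If $G$ and $G'$ are linear forests with the same number of vertices and the same number of edges, all of whose components have at least $k-1$ vertices, then $\mathcal{D}_k(G)=\mathcal{D}_k(G')$.
   Context: A linear forest is a disjoint union of paths. The $k$-deck $\mathcal{D}_k(G)$ is the multiset of isomorphism classes of the induced subgraphs of $G$ on $k$ vertices. *)

From mathcomp Require Import all_boot.
Unset Strict Implicit. Unset Printing Implicit Defensive.

Record graph : Type := Graph {
  V : finType;
  adj : rel V;
  adj_sym : symmetric adj;
  adj_irrefl : irreflexive adj
}.

Definition nverts (G : graph) : nat := #|V G|.

Definition nedges (G : graph) : nat :=
  #|[set E : {set V G} | [exists x, exists y, (E == [set x; y]) && adj G x y]]|.

Definition consec (T : eqType) (p : seq T) (x y : T) : bool :=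
  ((x, y) \in zip p (behead p)) || ((y, x) \in zip p (behead p)).

(* P is a decomposition of G into vertex-disjoint paths (the components):
   every vertex lies in exactly one of the (nonempty) vertex sequences of P,
   and x ~ y iff x, y are consecutive in one of these sequences. *)
Definition path_decomposition (G : graph) (P : seq (seq (V G))) : Prop :=
  [/\ uniq (flatten P),
      (forall x : V G, x \in flatten P),
      (forall p, p \in P -> p != [::]) &
      (forall x y : V G, adj G x y = has (fun p => consec _ p x y) P)].

Definition linear_forest_minc (G : graph) (m : nat) : Prop :=
  exists P, path_decomposition G P /\ (forall p, p \in P -> m <= size p).

Definition linear_forest (G : graph) : Prop := linear_forest_minc G 0.

Definition induced_iso (G : graph) (S : {set V G}) (H : graph) : bool :=
  [exists f : {ffun V H -> V G},
     [&& injectiveb f, f @: setT == S &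
         [forall a, forall b, adj H a b == adj G (f a) (f b)]]].

(* multiplicity of the isomorphism class of H in the k-deck of G *)
Definition deck_count (k : nat) (G H : graph) : nat :=
  #|[set S : {set V G} | (#|S| == k) && induced_iso G S H]|.

Definition same_deck (k : nat) (G G' : graph) : Prop :=
  forall H : graph, deck_count k G H = deck_count k G' H.

From mathcomp Require Import all_boot zify.

Set Implicit Arguments.
Unset Strict Implicit.
Unset Printing Implicit Defensive.

(* Lay the components of a linear forest out on a line, separated by gaps. A vertex set
   then becomes a 0/1 word, and the subgraph it induces is the disjoint union of the
   paths formed by the maximal runs of ones of that word. So the multiplicity of H in
   the k-deck is a sum, over all fillings of blocks whose lengths are the orders of the
   components, of a function F of the word that only depends on the multiset of lengths
   of its runs of ones and vanishes on words of weight above k.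

   For such an F, the sum over two blocks of lengths a and b only depends on a + b as
   long as a, b >= k - 1. Passing from lengths (a, b + 1) to (a + 1, b) trades the
   words u.1v for u1.v (the dot is the gap). Splitting off the run of ones through the
   moved position turns both sums into F(1^k) plus, for each s < k - 1, a sum over two
   blocks of lengths (a, b - s - 1), resp. (a - s - 1, b), of z |-> F(z.1^(s+1)), a
   function of weight bound k - s - 1; these agree by induction on k. Hence the deck
   only depends on the number of components and the number of vertices, and the former
   is the number of vertices minus the number of edges. *)

(** * Sums over binary words *)

Notation word := (seq bool).
Notation weight := (count id).

Fixpoint sum_words (m : nat) (F : word -> nat) : nat :=
  if m is m'.+1 then
    sum_words m' (fun w => F (true :: w)) + sum_words m' (fun w => F (false :: w))
  else F [::].

Lemma eq_sum_words m F1 F2 :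
  (forall w, size w = m -> F1 w = F2 w) -> sum_words m F1 = sum_words m F2.
Proof.
elim: m F1 F2 => [|m IHm] F1 F2 eqF /=; first exact: eqF.
by congr (_ + _); apply: IHm => w sz_w; apply: eqF; rewrite /= sz_w.
Qed.

Lemma sum_wordsD m F1 F2 :
  sum_words m (fun w => F1 w + F2 w) = sum_words m F1 + sum_words m F2.
Proof. by elim: m F1 F2 => [|m IHm] F1 F2 //=; rewrite !IHm addnACA. Qed.

Lemma sum_wordsMl m c F : sum_words m (fun w => c * F w) = c * sum_words m F.
Proof. by elim: m F => [|m IHm] F //=; rewrite !IHm mulnDr. Qed.

Lemma sum_words_eq0 m F : (forall w, F w = 0) -> sum_words m F = 0.
Proof. by elim: m F => [|m IHm] F F0 /=; rewrite ?F0 ?IHm. Qed.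

Lemma exchange_sum_words m m' (F : word -> word -> nat) :
  sum_words m (fun u => sum_words m' (F u)) =
  sum_words m' (fun v => sum_words m (F^~ v)).
Proof. by elim: m F => [|m IHm] F //=; rewrite !IHm -sum_wordsD. Qed.

Lemma sum_words_rcons m F :
  sum_words m.+1 F =
  sum_words m (fun w => F (rcons w true)) + sum_words m (fun w => F (rcons w false)).
Proof.
elim: m F => [|m IHm] F //.
rewrite -[sum_words m.+2 F]/(sum_words m.+1 (fun w => F (true :: w))
                             + sum_words m.+1 (fun w => F (false :: w))).
by rewrite (IHm (fun w => F (true :: w))) (IHm (fun w => F (false :: w))) addnACA.
Qed.

Lemma sum_words_cat m m' F :
  sum_words (m + m') F = sum_words m (fun u => sum_words m' (fun v => F (u ++ v))).
Proof. by elim: m F => [|m IHm] F //=; rewrite !IHm. Qed.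

Lemma sum_words_weight0 m F :
  (forall w, 0 < weight w -> F w = 0) -> sum_words m F = F (nseq m false).
Proof.
elim: m F => [|m IHm] F F0 //=.
rewrite sum_words_eq0 => [|w]; last by apply: F0.
by rewrite add0n; apply: IHm => w w_gt0; apply: F0.
Qed.

Ltac weight_lia := do 3 (rewrite /= ?count_cat ?count_nseq); lia.

Definition weight_bounded (J : nat) (F : word -> nat) := forall w, J < weight w -> F w = 0.

Lemma sum_words_first_run J m F : J <= m -> weight_bounded J F ->
  sum_words m F =
  \sum_(s < J) sum_words (m - s.+1) (fun w => F (nseq s true ++ false :: w))
  + F (nseq J true ++ nseq (m - J) false).
Proof.
elim: m J F => [|m IHm] [|J] F //= le_Jm bF; first by rewrite big_ord0.
  rewrite big_ord0 sum_words_eq0 => [|w]; last by apply: bF.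
  by rewrite sum_words_weight0 // => w w_gt0; apply: bF.
rewrite (IHm J (fun w => F (true :: w))) // => [|w w_gt]; last by apply: bF.
rewrite big_ord_recl subn1 subSS.
under [in RHS]eq_bigr => s _ do rewrite lift0 subSS.
rewrite /=; lia.
Qed.

Lemma sum_words_rev m F : sum_words m (fun w => F (rev w)) = sum_words m F.
Proof.
elim: m F => [|m IHm] F //; rewrite sum_words_rcons /=.
by congr (_ + _); rewrite -[RHS]IHm; apply: eq_sum_words => w _; rewrite rev_rcons.
Qed.

Lemma sum_words_last_run J m F : J <= m -> weight_bounded J F ->
  sum_words m F =
  \sum_(s < J) sum_words (m - s.+1) (fun w => F (w ++ false :: nseq s true))
  + F (nseq (m - J) false ++ nseq J true).
Proof.
move=> le_Jm bF; rewrite -sum_words_rev (sum_words_first_run le_Jm) => [|w]; last first.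
  by move=> w_gt; apply: bF; rewrite count_rev.
rewrite rev_cat !rev_nseq; congr (_ + _); apply: eq_bigr => s _.
rewrite -sum_words_rev; apply: eq_sum_words => w _.
by rewrite rev_cat rev_cons rev_nseq revK cat_rcons.
Qed.

(** * Block-invariant functions *)

(* Equivalently, [F w] only depends on the multiset of lengths of the maximal runs of
   ones in [w]. *)
Definition block_invariant (F : word -> nat) :=
  [/\ forall a b c, F (a ++ false :: b ++ false :: c) = F (a ++ false :: c ++ false :: b),
      forall a b, F (a ++ false :: false :: b) = F (a ++ false :: b),
      forall a, F (false :: a) = F a &
      forall a, F (a ++ [:: false]) = F a].

Section BlockInvariant.

Variable F : word -> nat.
Hypothesis invF : block_invariant F.

Lemma block_invariant_swap a b c :
  F (a ++ false :: b ++ false :: c) = F (a ++ false :: c ++ false :: b).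
Proof. by case: invF. Qed.

Lemma block_invariant_swap_mid a b c d :
  F (a ++ false :: b ++ false :: c ++ false :: d) =
  F (a ++ false :: c ++ false :: b ++ false :: d).
Proof.
rewrite block_invariant_swap.
by have := block_invariant_swap (a ++ false :: c) d b; rewrite -!catA /= => <-.
Qed.

Lemma block_invariant_nseqL m a : F (nseq m false ++ a) = F a.
Proof. by case: invF => _ _ F0a _; elim: m => //= m <-; rewrite F0a. Qed.

Lemma block_invariant_nseqR m a : F (a ++ nseq m false) = F a.
Proof.
case: invF => _ _ _ Fa0; elim: m a => [|m IHm] a; first by rewrite cats0.
by rewrite -cat_rcons IHm -cats1 Fa0.
Qed.

End BlockInvariant.

Lemma block_invariant_append F c :
  block_invariant F -> block_invariant (fun z => F (z ++ false :: c)).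
Proof.
move=> invF; have swap_mid := block_invariant_swap_mid invF.
case: invF => _ F00 F0a Fa0; split=> [a b d|a b|a|a] /=.
- by rewrite -!catA /= -!catA /= swap_mid.
- by rewrite -!catA /= F00.
- by rewrite F0a.
- by rewrite -catA /= F00.
Qed.

Lemma block_invariant_prepend F c :
  block_invariant F -> block_invariant (fun z => F (c ++ false :: z)).
Proof.
case=> Fswap F00 F0a Fa0; split=> [a b d|a b|a|a] /=.
- by have := Fswap (c ++ false :: a) b d; rewrite -!catA.
- by have := F00 (c ++ false :: a) b; rewrite -!catA.
- exact: F00.
- by have := Fa0 (c ++ false :: a); rewrite -!catA.
Qed.

Definition sum_pair (F : word -> nat) (a b : nat) : nat :=
  sum_words a (fun u => sum_words b (fun v => F (u ++ false :: v))).

Lemma rcons_nseq (T : Type) n (x : T) : rcons (nseq n x) x = nseq n.+1 x.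
Proof. by elim: n => //= n ->. Qed.

Section OneRun.

Variables (F : word -> nat) (J : nat).
Hypotheses (invF : block_invariant F) (bF : weight_bounded J.+1 F).

Lemma sum_words_sep_one a b : J <= b ->
  sum_words a (fun u => sum_words b (fun v => F (u ++ false :: true :: v))) =
  \sum_(s < J) sum_pair (fun z => F (z ++ false :: nseq s.+1 true)) a (b - s.+1)
  + F (nseq J.+1 true).
Proof.
move=> le_Jb; rewrite exchange_sum_words (sum_words_first_run le_Jb) => [|v v_gt]; last first.
  by apply: sum_words_eq0 => u; apply: bF; weight_lia.
congr (_ + _).
  apply: eq_bigr => s _; rewrite exchange_sum_words.
  apply: eq_sum_words => u _; apply: eq_sum_words => w _.
  by rewrite (block_invariant_swap invF u (true :: nseq s true)) -catA.
rewrite sum_words_weight0 => [|u u_gt]; last by apply: bF; weight_lia.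
case: invF => _ _ F0a _.
rewrite block_invariant_nseqL // F0a -[true :: _]/(nseq J.+1 true ++ _).
by rewrite block_invariant_nseqR.
Qed.

Lemma sum_words_one_sep a b : J <= a ->
  sum_words a (fun u => sum_words b (fun v => F (u ++ true :: false :: v))) =
  \sum_(s < J) sum_pair (fun z => F (z ++ false :: nseq s.+1 true)) (a - s.+1) b
  + F (nseq J.+1 true).
Proof.
move=> le_Ja; rewrite (sum_words_last_run le_Ja) => [|u u_gt]; last first.
  by apply: sum_words_eq0 => v; apply: bF; weight_lia.
congr (_ + _).
  apply: eq_bigr => s _; apply: eq_sum_words => w _; apply: eq_sum_words => v _.
  rewrite -catA /= -(cat_rcons true (nseq s true)) rcons_nseq.
  by rewrite (block_invariant_swap invF w (nseq s.+1 true)) -catA.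
rewrite sum_words_weight0 => [|v v_gt]; last by apply: bF; weight_lia.
rewrite -catA block_invariant_nseqL // -(cat_rcons true (nseq J true)) rcons_nseq.
by rewrite -[false :: _]/(nseq b.+1 false) block_invariant_nseqR.
Qed.

End OneRun.

Definition pair_balanced (J : nat) : Prop :=
  forall F, block_invariant F -> weight_bounded J F ->
  forall a b a' b', J <= a.+1 -> J <= b.+1 -> J <= a'.+1 -> J <= b'.+1 ->
  a + b = a' + b' -> sum_pair F a b = sum_pair F a' b'.

Lemma sum_pair_step J F a b :
  (forall J', J' < J -> pair_balanced J') ->
  block_invariant F -> weight_bounded J F -> J <= a.+1 -> J <= b.+1 ->
  sum_pair F a b.+1 = sum_pair F a.+1 b.
Proof.
move=> IH invF bF le_Ja le_Jb.
rewrite /sum_pair sum_words_rcons /= sum_wordsD.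
congr (_ + _); last first.
  by apply: eq_sum_words => u _; apply: eq_sum_words => v _; rewrite cat_rcons.
under [in RHS]eq_sum_words => u _ do under eq_sum_words => v _ do rewrite cat_rcons.
case: J IH bF le_Ja le_Jb => [|J] IH bF le_Ja le_Jb.
  by rewrite !sum_words_eq0 // => u; apply: sum_words_eq0 => v; apply: bF; weight_lia.
rewrite (sum_words_sep_one invF bF) ?(sum_words_one_sep invF bF) //.
congr (_ + _); apply: eq_bigr => s _.
have lt_sJ := ltn_ord s.
apply: (IH (J - s)); [lia | exact: block_invariant_append | | lia..].
by move=> z z_gt; apply: bF; weight_lia.
Qed.

Lemma sum_pair_balanced J : pair_balanced J.
Proof.
elim/ltn_ind: J => J IH F invF bF.
have shift d a : J <= a.+1 -> sum_pair F a (J.-1 + d) = sum_pair F (a + d) J.-1.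
  elim: d a => [|d IHd] a le_Ja; first by rewrite !addn0.
  rewrite addnS (sum_pair_step IH invF bF) ?IHd ?addSnnS //; lia.
move=> a b a' b' le_Ja le_Jb le_Ja' le_Jb' eq_ab.
have le_b : J.-1 <= b by lia.
have le_b' : J.-1 <= b' by lia.
rewrite -(subnKC le_b) -(subnKC le_b') !shift //.
by congr sum_pair; lia.
Qed.

Fixpoint sum_blocks (ms : seq nat) (F : word -> nat) : nat :=
  if ms is m :: ms' then sum_words m (fun u => sum_blocks ms' (fun w => F (u ++ false :: w)))
  else F [::].

Lemma eq_sum_blocks ms F1 F2 : F1 =1 F2 -> sum_blocks ms F1 = sum_blocks ms F2.
Proof.
elim: ms F1 F2 => [|m ms IHms] F1 F2 eqF /=; first exact: eqF.
by apply: eq_sum_words => u _; apply: IHms => w; apply: eqF.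
Qed.

Lemma sum_blocks_eq0 ms F : (forall w, F w = 0) -> sum_blocks ms F = 0.
Proof.
elim: ms F => [|m ms IHms] F F0 /=; first exact: F0.
by apply: sum_words_eq0 => u; apply: IHms => w; apply: F0.
Qed.

Lemma sum_blocksD ms F1 F2 :
  sum_blocks ms (fun w => F1 w + F2 w) = sum_blocks ms F1 + sum_blocks ms F2.
Proof.
elim: ms F1 F2 => [|m ms IHms] F1 F2 //=.
by rewrite -sum_wordsD; apply: eq_sum_words => u _; rewrite IHms.
Qed.

Lemma sum_blocksMl ms c F : sum_blocks ms (fun w => c * F w) = c * sum_blocks ms F.
Proof.
elim: ms F => [|m ms IHms] F //=.
by rewrite -sum_wordsMl; apply: eq_sum_words => u _; rewrite -IHms.
Qed.

Lemma block_invariant_sum_blocks ms (H : word -> word -> nat) :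
  (forall w, block_invariant (H^~ w)) -> block_invariant (fun z => sum_blocks ms (H z)).
Proof.
move=> invH; split=> [a b c|a b|a|a]; apply: eq_sum_blocks => w;
  by case: (invH w).
Qed.

Lemma sum_blocks_rebalance k m1 m2 m1' m2' ms F :
  block_invariant F -> weight_bounded k F ->
  k.-1 <= m1 -> k.-1 <= m2 -> k.-1 <= m1' -> k.-1 <= m2' -> m1 + m2 = m1' + m2' ->
  sum_blocks [:: m1, m2 & ms] F = sum_blocks [:: m1', m2' & ms] F.
Proof.
move=> invF bF le_m1 le_m2 le_m1' le_m2' eq_m.
pose G z := sum_blocks ms (fun w => F (z ++ false :: w)).
have sum_blocks2 p q : sum_blocks [:: p, q & ms] F = sum_pair G p q.
  apply: eq_sum_words => u _; apply: eq_sum_words => v _.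
  by apply: eq_sum_blocks => w; rewrite -catA.
have invG : block_invariant G.
  by apply: block_invariant_sum_blocks => w; apply: block_invariant_append.
have bG : weight_bounded k G.
  by move=> z z_gt; apply: sum_blocks_eq0 => w; apply: bF; weight_lia.
by rewrite !sum_blocks2; apply: (@sum_pair_balanced k G invG bG); lia.
Qed.

Lemma sum_blocks_canonical k m ms F :
  block_invariant F -> weight_bounded k F -> all (leq k.-1) (m :: ms) ->
  sum_blocks (m :: ms) F =
  sum_blocks (sumn (m :: ms) - size ms * k.-1 :: nseq (size ms) k.-1) F.
Proof.
elim: ms m F => [|m2 ms IHms] m F invF bF; first by rewrite /= addn0 subn0.
move=> /and3P [le_m le_m2 le_ms].
have le_sum : size ms * k.-1 <= sumn ms.
  by elim: ms {IHms} le_ms => //= x s IHs /andP [le_x /IHs]; lia.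
transitivity (sum_blocks [:: m, sumn (m2 :: ms) - size ms * k.-1 & nseq (size ms) k.-1] F).
  apply: eq_sum_words => u _; apply: (IHms m2 (fun w => F (u ++ false :: w))) => /=.
  - exact: block_invariant_prepend.
  - by move=> w w_gt; apply: bF; weight_lia.
  - by rewrite le_m2.
rewrite -[RHS]/(sum_blocks [:: m + (m2 + sumn ms) - (size ms).+1 * k.-1, k.-1
                             & nseq (size ms) k.-1] F).
by apply: (sum_blocks_rebalance _ invF bF) => //=; rewrite ?mulSn; lia.
Qed.

Lemma sum_blocks_eq k ms ms' F :
  block_invariant F -> weight_bounded k F ->
  all (leq k.-1) ms -> all (leq k.-1) ms' ->
  size ms = size ms' -> sumn ms = sumn ms' -> sum_blocks ms F = sum_blocks ms' F.
Proof.
case: ms ms' => [|m ms] [|m' ms'] // invF bF le_ms le_ms' [eq_size] eq_sum.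
rewrite (sum_blocks_canonical invF bF le_ms) (sum_blocks_canonical invF bF le_ms').
by rewrite eq_size eq_sum.
Qed.

(** * Induced subgraphs of paths *)

Lemma bij_in_imset (T1 T2 : finType) (S1 : {set T1}) (S2 : {set T2})
    (g : T1 -> T2) (h : T2 -> T1) :
  {in S1, forall x, g x \in S2 /\ h (g x) = x} ->
  {in S2, forall y, h y \in S1 /\ g (h y) = y} ->
  g @: S1 = S2 /\ {in S1 &, injective g}.
Proof.
move=> gS hS; split; last first.
  by move=> x x' /gS [_ hgx] /gS [_ hgx'] eq_g; rewrite -hgx -hgx' eq_g.
apply/setP => y; apply/imsetP/idP => [[x /gS [] gx _ ->] // | /hS [hy ghy]].
by exists (h y).
Qed.

Lemma induced_iso_image (G1 G2 H : graph) (S : {set V G1}) (g : V G1 -> V G2) :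
  {in S &, injective g} -> {in S &, forall x y, adj G2 (g x) (g y) = adj G1 x y} ->
  induced_iso G1 S H -> induced_iso G2 (g @: S) H.
Proof.
move=> inj_g adj_g /existsP [f /and3P [/injectiveP inj_f /eqP im_f /forallP adj_f]].
have fS x : f x \in S by rewrite -im_f imset_f.
apply/existsP; exists [ffun x => g (f x)]; apply/and3P; split.
- by apply/injectiveP => x y; rewrite !ffunE => /inj_g eq_f; apply/inj_f/eq_f.
- by rewrite -im_f -imset_comp; apply/eqP/eq_imset => x; rewrite ffunE.
- apply/forallP => a; apply/forallP => b; rewrite !ffunE adj_g ?fS //.
  by move/forallP: (adj_f a).
Qed.

Lemma induced_iso_transfer (G1 G2 H : graph) (S1 : {set V G1}) (S2 : {set V G2})
    (g : V G1 -> V G2) (h : V G2 -> V G1) :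
  {in S1, forall x, g x \in S2 /\ h (g x) = x} ->
  {in S2, forall y, h y \in S1 /\ g (h y) = y} ->
  {in S1 &, forall x y, adj G2 (g x) (g y) = adj G1 x y} ->
  induced_iso G1 S1 H = induced_iso G2 S2 H.
Proof.
move=> gS hS adj_g.
have [im_g inj_g] := bij_in_imset gS hS.
have [im_h inj_h] := bij_in_imset hS gS.
have adj_h : {in S2 &, forall y y', adj G1 (h y) (h y') = adj G2 y y'}.
  move=> y y' /hS [hy ghy] /hS [hy' ghy'].
  by rewrite -adj_g // ghy ghy'.
apply/idP/idP => [/(induced_iso_image inj_g adj_g) | /(induced_iso_image inj_h adj_h)].
  by rewrite im_g.
by rewrite im_h.
Qed.

Definition nat_adj (i j : nat) : bool := (j == i.+1) || (i == j.+1).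

Lemma nat_adj_sym : symmetric nat_adj.
Proof. by move=> i j; rewrite /nat_adj orbC. Qed.

Lemma nat_adj_irr : irreflexive nat_adj.
Proof. by move=> i; rewrite /nat_adj; lia. Qed.

Definition path_graph (n : nat) : graph :=
  @Graph 'I_n (fun i j => nat_adj i j) (fun i j => nat_adj_sym i j) (fun i => nat_adj_irr i).

(* The path has one vertex more than [w] has letters, so that [inord] always has a
   target; that vertex is never in [ones w]. *)
Definition ones (w : word) : {set 'I_(size w).+1} := [set i : 'I__ | nth false w i].

Definition word_induces (H : graph) (w : word) : bool :=
  induced_iso (path_graph (size w).+1) (ones w) H.

Lemma nth_true_lt_size (w : word) i : nth false w i -> i < size w.
Proof. by apply: contraLR; rewrite -leqNgt => /(nth_default false) ->. Qed.

Lemma word_induces_transfer H w1 w2 (g h : nat -> nat) :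
  (forall i, nth false w1 i -> nth false w2 (g i) /\ h (g i) = i) ->
  (forall j, nth false w2 j -> nth false w1 (h j) /\ g (h j) = j) ->
  (forall i j, nth false w1 i -> nth false w1 j -> nat_adj (g i) (g j) = nat_adj i j) ->
  word_induces H w1 = word_induces H w2.
Proof.
move=> gw hw adj_g.
have lt_size w j : nth false w j -> j < (size w).+1 by move/nth_true_lt_size/ltnW.
pose g' (i : 'I_(size w1).+1) : 'I_(size w2).+1 := inord (g i).
pose h' (j : 'I_(size w2).+1) : 'I_(size w1).+1 := inord (h j).
apply: (@induced_iso_transfer (path_graph _) (path_graph _) H _ _ g' h').
- move=> i; rewrite !inE /g' /h' => /gw [w2g hg].
  by rewrite inordK ?lt_size // hg inord_val.
- move=> j; rewrite !inE /g' /h' => /hw [w1h gh].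
  by rewrite inordK ?lt_size // gh inord_val.
- move=> i j; rewrite !inE /g' /= => w1i w1j.
  by rewrite !inordK ?adj_g // lt_size //; [case: (gw _ w1j) | case: (gw _ w1i)].
Qed.

Lemma nth_sep (a b : word) i :
  nth false (a ++ false :: b) i =
  if i < size a then nth false a i
  else if i == size a then false else nth false b (i - (size a).+1).
Proof.
rewrite nth_cat; case: ltnP => // le_ai; case: eqP => [->|ne_ai]; first by rewrite subnn.
by rewrite (_ : i - size a = (i - (size a).+1).+1) //; lia.
Qed.

Lemma word_induces_delete_sep H a b : ~~ (last false a && head false b) ->
  word_induces H (a ++ false :: b) = word_induces H (a ++ b).
Proof.
move=> no_merge.
have w1P i : nth false (a ++ false :: b) i ->
    i < size a /\ nth false a i \/ size a < i /\ nth false b (i - (size a).+1).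
  rewrite nth_sep; case: ltnP => [lt_ia w1i | le_ai]; first by left.
  by case: eqP => // ne_ia w1i; right; split => //; lia.
have no_bridge i j : nth false (a ++ false :: b) i -> nth false (a ++ false :: b) j ->
    i.+1 = size a -> j = (size a).+1 -> False.
  move=> w1i w1j ei ej; move/negP: no_merge; apply; apply/andP; split.
    by move: w1i; rewrite nth_sep -ei ltnSn -nth_last -ei.
  by move: w1j; rewrite nth_sep ej !ifN ?subnn //; lia.
apply: (@word_induces_transfer H _ _ (fun i => if i < size a then i else i.-1)
                                     (fun j => if j < size a then j else j.+1)).
- move=> i /w1P [[lt_ia w1i] | [lt_ai w1i]]; rewrite nth_cat.
    by rewrite !lt_ia.
  have -> : (i < size a) = false by lia.
  have -> : (i.-1 < size a) = false by lia.
  rewrite (_ : i.-1 - size a = i - (size a).+1); last lia.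
  by split => //; lia.
- move=> j; rewrite nth_cat nth_sep; case: ltnP => [lt_ja -> | le_aj w2j].
    by rewrite lt_ja.
  have -> : (j.+1 < size a) = false by lia.
  have -> : (j.+1 == size a) = false by lia.
  by rewrite subSS w2j.
- move=> i j w1i w1j.
  have := no_bridge i j w1i w1j; have := no_bridge j i w1j w1i.
  case: (w1P i w1i) => -[? _]; case: (w1P j w1j) => -[? _]; rewrite /nat_adj;
    do !case: ifP => ?; lia.
Qed.

Lemma nth_sepL (a b : word) i : i < size a -> nth false (a ++ false :: b) i = nth false a i.
Proof. by move=> lt_ia; rewrite nth_sep lt_ia. Qed.

Lemma nth_sepR (a b : word) i : size a < i ->
  nth false (a ++ false :: b) i = nth false b (i - (size a).+1).
Proof. by move=> lt_ai; rewrite nth_sep !ifN //; lia. Qed.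

Lemma nth_true_blocks3 a b c i : nth false (a ++ false :: b ++ false :: c) i ->
  [\/ i < size a /\ nth false a i,
      size a < i <= size a + size b /\ nth false b (i - (size a).+1) |
      (size a + size b).+1 < i < (size a + size b + size c).+2
      /\ nth false c (i - (size a + size b).+2)].
Proof.
rewrite nth_sep; case: ltnP => [lt_ia w_i | le_ai]; first by constructor 1.
case: eqP => // ne_ai; rewrite nth_sep; case: ltnP => [lt_i w_i | le_i].
  by constructor 2; split => //; lia.
case: eqP => // ne_i; rewrite -subnDA addnS addSn => w_i.
by constructor 3; split => //; have := nth_true_lt_size w_i; lia.
Qed.

(* Where position [i] of [a ++ false :: b ++ false :: c] goes in
   [a ++ false :: c ++ false :: b], for [A], [B], [C] the sizes of [a], [b], [c]. *)
Definition swap_pos (A B C i : nat) : nat :=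
  if i <= A then i else if i <= A + B then i + C.+1 else i - B.+1.

Lemma swap_pos_nth a b c i (A := size a) (B := size b) (C := size c) :
  nth false (a ++ false :: b ++ false :: c) i ->
  nth false (a ++ false :: c ++ false :: b) (swap_pos A B C i) /\
  swap_pos A C B (swap_pos A B C i) = i.
Proof.
move=> /nth_true_blocks3 w_i; split; last first.
  case: w_i => -[? _]; rewrite [X in swap_pos _ _ _ X]/swap_pos;
    by do !case: ifP => ?; rewrite /swap_pos; do !case: ifP => ?; lia.
case: w_i => -[? w_i].
- by rewrite /swap_pos ifT ?nth_sepL //; lia.
- rewrite /swap_pos ifN ?ifT ?nth_sepR ?nth_sepR; try lia.
  by rewrite (_ : _ - _ - _ = i - A.+1) //; lia.
- rewrite /swap_pos !ifN; try lia.
  rewrite nth_sepR ?nth_sepL; try lia.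
  by rewrite (_ : _ - _ - _ = i - (A + B).+2) //; lia.
Qed.

Lemma word_induces_swap H a b c :
  word_induces H (a ++ false :: b ++ false :: c) =
  word_induces H (a ++ false :: c ++ false :: b).
Proof.
apply: (@word_induces_transfer H _ _ (swap_pos (size a) (size b) (size c))
                                     (swap_pos (size a) (size c) (size b))).
- exact: swap_pos_nth.
- exact: swap_pos_nth.
- move=> i j /nth_true_blocks3 w_i /nth_true_blocks3 w_j; rewrite /nat_adj /swap_pos.
  by case: w_i => -[? _]; case: w_j => -[? _]; do !case: ifP => ?; lia.
Qed.

Definition deck_term (H : graph) (k : nat) (w : word) : nat :=
  (weight w == k) && word_induces H w.

Lemma block_invariant_deck_term H k : block_invariant (deck_term H k).
Proof.
rewrite /deck_term; split=> [a b c|a b|a|a].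
- rewrite word_induces_swap.
  by have -> : weight (a ++ false :: b ++ false :: c) = weight (a ++ false :: c ++ false :: b)
    by weight_lia.
- rewrite -!(cat_rcons false a) word_induces_delete_sep ?last_rcons //.
  by rewrite !count_cat.
- by rewrite (@word_induces_delete_sep H [::] a).
- by rewrite word_induces_delete_sep ?andbF // cats0 count_cat addn0.
Qed.

Lemma deck_term_bounded H k : weight_bounded k (deck_term H k).
Proof. by move=> w w_gt; rewrite /deck_term; case: eqP => //; lia. Qed.

(** * Counting edges *)

Fixpoint has_adjacent_ones (w : word) : bool :=
  if w is x :: w' then (x && head false w') || has_adjacent_ones w' else false.

Lemma has_adjacent_onesP w :
  reflect (exists i, nth false w i && nth false w i.+1) (has_adjacent_ones w).
Proof.
elim: w => [|x w IHw] /=; first by apply: ReflectF => -[i]; rewrite nth_nil.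
apply: (iffP orP) => [[x_w | /IHw [i w_i]] | [[|i] w_i]].
- by exists 0.
- by exists i.+1.
- by left.
- by right; apply/IHw; exists i.
Qed.

Lemma has_adjacent_ones_cat u w :
  has_adjacent_ones (u ++ false :: w) = has_adjacent_ones u || has_adjacent_ones w.
Proof. by elim: u => [|x u IHu] //=; rewrite IHu orbA; case: u {IHu}. Qed.

Lemma has_adjacent_ones_weight w : has_adjacent_ones w -> 1 < weight w.
Proof.
elim: w => [|x w IHw] //= /orP [/andP [-> ] | /IHw]; last lia.
by case: w {IHw} => [|[] w] //=; lia.
Qed.

Definition edge_word (w : word) : nat := (weight w == 2) && has_adjacent_ones w.

Definition zero_word (w : word) : nat := weight w == 0.

Lemma edge_word_cat u w :
  edge_word (u ++ false :: w) = zero_word u * edge_word w + edge_word u * zero_word w.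
Proof.
rewrite /edge_word /zero_word count_cat /= has_adjacent_ones_cat.
have := @has_adjacent_ones_weight u; have := @has_adjacent_ones_weight w.
by case: (has_adjacent_ones u); case: (has_adjacent_ones w) => /= hw hu; lia.
Qed.

Lemma sum_words_zero_word m : sum_words m zero_word = 1.
Proof.
by rewrite sum_words_weight0 /zero_word ?count_nseq // => w w_gt; case: eqP => //; lia.
Qed.

Lemma sum_blocks_zero_word ms : sum_blocks ms zero_word = 1.
Proof.
elim: ms => [|m ms IHms] //=; rewrite -(sum_words_zero_word m).
apply: eq_sum_words => u _; rewrite -[RHS]muln1 -IHms -sum_blocksMl.
by apply: eq_sum_blocks => w; rewrite /zero_word count_cat /=; lia.
Qed.

Lemma sum_words_edge_word m : sum_words m edge_word = m.-1.
Proof.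
elim: m => [|m IHm] //=.
rewrite -[sum_words m (fun w => _ (false :: w))]/(sum_words m edge_word) IHm.
case: m {IHm} => [|m] //=.
have -> : sum_words m (fun w => edge_word [:: true, true & w]) = 1.
  rewrite -(sum_words_zero_word m); apply: eq_sum_words => w _.
  by rewrite /edge_word /zero_word /= andbT; lia.
rewrite sum_words_eq0 => [|w]; first lia.
rewrite /edge_word /=; have := @has_adjacent_ones_weight w.
by case: has_adjacent_ones => /= [/(_ isT)|_]; [lia | rewrite andbF].
Qed.

Lemma sum_blocks_edge_word ms :
  all (leq 1) ms -> sum_blocks ms edge_word + size ms = sumn ms.
Proof.
elim: ms => [|m ms IHms] //= /andP [m_gt0 /IHms IH].
have split_first u : sum_blocks ms (fun w => edge_word (u ++ false :: w)) =
    sum_blocks ms edge_word * zero_word u + edge_word u.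
  rewrite (eq_sum_blocks _ (edge_word_cat u)) sum_blocksD !sum_blocksMl.
  by rewrite sum_blocks_zero_word muln1 mulnC.
rewrite (eq_sum_words (fun u _ => split_first u)) sum_wordsD sum_wordsMl.
by rewrite sum_words_zero_word sum_words_edge_word; lia.
Qed.

(** * Linear forests as words *)

Lemma sum_subsets (T : finType) (vs : seq T) (F : word -> nat) : uniq vs ->
  \sum_(S : {set T} | S \subset [set x in vs]) F [seq x \in S | x <- vs] =
  sum_words (size vs) F.
Proof.
elim: vs F => [|x vs IHvs] F /=.
  move=> _; rewrite (big_pred1 set0) // => S.
  by rewrite /= -subset0; apply: eq_subset_r => y; rewrite !inE.
move=> /andP [x_vs uniq_vs].
have setD1_id (S : {set T}) : x \notin S -> S :\ x = S.
  by move=> xS; apply/setP => y; rewrite !inE; case: eqP => // ->; rewrite (negPf xS).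
have sub_cons (S : {set T}) : (S \subset [set y in x :: vs]) = (S :\ x \subset [set y in vs]).
  apply/subsetP/subsetP => sub y; rewrite !inE.
    by case/andP=> /negPf y_x /sub; rewrite inE in_cons y_x.
  by case: eqP => [-> | /eqP y_x yS] //; have := sub y; rewrite !inE y_x yS; apply.
rewrite (bigID (fun S : {set T} => x \in S)) /=; congr (_ + _).
  rewrite -(IHvs (fun w => F (true :: w))) //.
  rewrite (reindex_onto (fun S => x |: S) (fun S => S :\ x)) /=; last first.
    by move=> S /andP [_ xS]; rewrite setD1K.
  apply: eq_big => [S | S /andP [/andP [_ xS] /eqP <-]].
    rewrite sub_cons setU11 andbT; apply/andP/idP => [[sub /eqP <-] // | sub].
    have xS : x \notin S by apply: contra x_vs => /(subsetP sub); rewrite inE.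
    by rewrite setU1K.
  rewrite setU11; congr (F (_ :: _)); apply/eq_in_map => y y_vs.
  by rewrite in_setU1 !inE; case: eqP y_vs => // ->; rewrite (negPf x_vs).
rewrite -(IHvs (fun w => F (false :: w))) //.
apply: eq_big => [S | S /andP [_ /negPf xS]]; last by rewrite xS.
rewrite sub_cons; apply/andP/idP => [[sub xS] | sub]; first by rewrite -(setD1_id S xS).
have xS : x \notin S by apply: contra x_vs => /(subsetP sub); rewrite inE.
by rewrite setD1_id.
Qed.

Fixpoint insert_seps (ms : seq nat) (b : word) : word :=
  if ms is m :: ms' then take m b ++ false :: insert_seps ms' (drop m b) else [::].

Lemma sum_blocks_insert_seps ms F :
  sum_blocks ms F = sum_words (sumn ms) (fun b => F (insert_seps ms b)).
Proof.
elim: ms F => [|m ms IHms] F //=; rewrite sum_words_cat.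
apply: eq_sum_words => u size_u; rewrite IHms; apply: eq_sum_words => v _.
by rewrite take_size_cat // drop_size_cat.
Qed.

Lemma index_nth_Some (T : eqType) (s : seq (option T)) i x :
  uniq (pmap id s) -> nth None s i = Some x -> index (Some x) s = i.
Proof.
elim: s i => [|o s IHs] i; first by rewrite nth_nil.
case: i => [|i] /=; first by move=> _ ->; rewrite eqxx.
case: o => [y|] /=; last by move=> uniq_s /(IHs _ uniq_s) ->.
move=> /andP [y_s uniq_s] s_i; rewrite (IHs _ uniq_s s_i) ifN //.
apply: contra y_s => /eqP [->]; rewrite mem_pmap map_id -s_i mem_nth //.
by case: ltnP s_i => // /(nth_default None) ->.
Qed.

Lemma mem_zip_behead (T : eqType) (x0 : T) (s : seq T) a b :
  reflect (exists2 i, i.+1 < size s & nth x0 s i = a /\ nth x0 s i.+1 = b)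
          ((a, b) \in zip s (behead s)).
Proof.
have size_zs : size (zip s (behead s)) = (size s).-1.
  by rewrite size_zip size_behead; lia.
have nth_zs i : i < (size s).-1 ->
    nth (x0, x0) (zip s (behead s)) i = (nth x0 s i, nth x0 s i.+1).
  by move=> lt_i; rewrite nth_zip_cond size_zs lt_i nth_behead.
apply: (iffP (nthP (x0, x0))); rewrite size_zs => -[i lt_i].
  by rewrite nth_zs // => -[<- <-]; exists i => //; lia.
by move=> [<- <-]; exists i; [lia | rewrite nth_zs //; lia].
Qed.

Lemma mem_zip_behead_sep (T : eqType) (p : seq T) (r : seq (option T)) x y :
  ((Some x, Some y) \in zip (map Some p ++ None :: r) (behead (map Some p ++ None :: r))) =
  ((x, y) \in zip p (behead p)) || ((Some x, Some y) \in zip r (behead r)).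
Proof.
elim: p => [|a [|b p] IHp] /=.
- by case: r => [|z r] //=; rewrite in_cons.
- by rewrite in_cons xpair_eqE andbF; apply: IHp.
- by rewrite !in_cons !xpair_eqE /= -orbA; congr (_ || _); apply: IHp.
Qed.

Lemma card_set_sum (T : finType) (p : pred T) : #|[set x | p x]| = \sum_x p x.
Proof. by rewrite -sum1dep_card big_mkcond. Qed.

Section LinearForestLayout.

Variables (G : graph) (P : seq (seq (V G))).
Hypothesis PD : path_decomposition G P.

Definition layout : seq (option (V G)) := flatten [seq rcons (map Some p) None | p <- P].

Definition word_of (S : {set V G}) : word :=
  [seq if o is Some x then x \in S else false | o <- layout].

Definition pos (x : V G) : nat := index (Some x) layout.

Lemma pmap_layout : pmap id layout = flatten P.
Proof.
rewrite /layout; elim: P => [|p P' IHP] //=.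
rewrite pmap_cat IHP -cats1 pmap_cat /= cats0; congr (_ ++ _).
by elim: p {IHP} => //= x p ->.
Qed.

Lemma mem_layout x : Some x \in layout.
Proof.
have : x \in pmap id layout by rewrite pmap_layout; case: PD => _ ->.
by rewrite mem_pmap map_id.
Qed.

Lemma pos_lt_size x : pos x < size layout.
Proof. by rewrite index_mem mem_layout. Qed.

Lemma nth_layout_pos x : nth None layout (pos x) = Some x.
Proof. by rewrite nth_index ?mem_layout. Qed.

Lemma pos_nth i x : nth None layout i = Some x -> pos x = i.
Proof. by apply: index_nth_Some; rewrite pmap_layout; case: PD. Qed.

Lemma nth_word_of S i :
  nth false (word_of S) i = if nth None layout i is Some x then x \in S else false.
Proof.
rewrite /word_of; case: (ltnP i (size layout)) => [lt_i | le_i]; first exact: nth_map.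
by rewrite !nth_default ?size_map.
Qed.

Lemma nth_word_of_pos S x : nth false (word_of S) (pos x) = (x \in S).
Proof. by rewrite nth_word_of nth_layout_pos. Qed.

Lemma nth_word_of_true S i : nth false (word_of S) i -> exists2 x, x \in S & pos x = i.
Proof.
rewrite nth_word_of; case e: (nth None layout i) => [x|] // xS.
by exists x => //; apply: pos_nth.
Qed.

Lemma weight_word_of S : weight (word_of S) = #|S|.
Proof.
have count_layout : count [pred o | if o is Some x then x \in S else false] layout =
                    count (mem S) (pmap id layout).
  by elim: layout => [|[x|] s IHs] //=; rewrite IHs.
rewrite count_map [LHS]count_layout pmap_layout.
have perm_P : perm_eq (flatten P) (enum (V G)).
  case: PD => uniq_P all_P _ _; apply: uniq_perm; rewrite ?enum_uniq // => x.
  by rewrite mem_enum all_P.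
by rewrite (permP perm_P) enumT cardE -size_filter.
Qed.

Lemma sum_word_of F : \sum_(S : {set V G}) F (word_of S) = sum_blocks (map size P) F.
Proof.
have word_ofE S : word_of S = insert_seps (map size P) [seq x \in S | x <- flatten P].
  rewrite /word_of /layout; elim: P => [|p P' IHP] //=.
  rewrite map_cat IHP map_cat -cats1 map_cat /= take_size_cat ?size_map //.
  by rewrite drop_size_cat ?size_map // -catA -map_comp.
rewrite sum_blocks_insert_seps -size_flatten -sum_subsets; last by case: PD.
apply: eq_big => [S | S _]; last by rewrite word_ofE.
by apply/esym/subsetP => x _; rewrite inE; case: PD => _ ->.
Qed.

Lemma adj_pos x y : adj G x y = nat_adj (pos x) (pos y).
Proof.
have zip_layout u v :
    ((Some u, Some v) \in zip layout (behead layout)) = (pos v == (pos u).+1).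
  apply/(mem_zip_behead None)/eqP => [[i _ [/pos_nth <- /pos_nth <-]] // | e].
  by exists (pos u); rewrite -?e ?pos_lt_size ?nth_layout_pos.
have has_zip u v : has (fun p => (u, v) \in zip p (behead p)) P =
                   ((Some u, Some v) \in zip layout (behead layout)).
  by rewrite /layout; elim: P => [|p P' IHP] //=; rewrite cat_rcons mem_zip_behead_sep IHP.
case: PD => _ _ _ ->; rewrite /nat_adj -!zip_layout -!has_zip -has_predU.
by apply: eq_has.
Qed.

(* [x0] is only the vertex assigned to the positions of the gaps. *)
Lemma induced_iso_word_of H S (x0 : V G) :
  induced_iso G S H = word_induces H (word_of S).
Proof.
have lt_pos x : pos x < (size (word_of S)).+1 by rewrite size_map ltnS ltnW ?pos_lt_size.
pose g x : 'I_(size (word_of S)).+1 := inord (pos x).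
pose h (i : 'I_(size (word_of S)).+1) := odflt x0 (nth None layout i).
apply: (@induced_iso_transfer G (path_graph _) H _ _ g h).
- move=> x xS; rewrite inE /g /h inordK //.
  by rewrite nth_word_of_pos nth_layout_pos.
- move=> i; rewrite inE => /nth_word_of_true [x xS pos_x].
  by rewrite /h /g -pos_x nth_layout_pos /= pos_x inord_val.
- by move=> x y _ _; rewrite /= /g !inordK // adj_pos.
Qed.

Lemma nverts_layout : nverts G = sumn (map size P).
Proof.
case: PD => uniq_P all_P _ _.
rewrite /nverts cardT -size_flatten; apply/perm_size/uniq_perm; rewrite ?enum_uniq // => x.
by rewrite mem_enum all_P.
Qed.

Lemma edge_word_of (E : {set V G}) :
  [exists x, exists y, (E == [set x; y]) && adj G x y] =
  (weight (word_of E) == 2) && has_adjacent_ones (word_of E).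
Proof.
rewrite weight_word_of; apply/idP/idP.
  case/existsP => x /existsP [y /andP [/eqP -> xy]].
  have nxy : x != y by apply: contraTneq xy => ->; rewrite adj_irrefl.
  rewrite cards2 nxy /=; apply/has_adjacent_onesP.
  move: xy; rewrite adj_pos /nat_adj => /orP [/eqP e | /eqP e].
    by exists (pos x); rewrite -e !nth_word_of_pos !inE !eqxx ?orbT.
  by exists (pos y); rewrite -e !nth_word_of_pos !inE !eqxx ?orbT.
case/andP => /eqP card2 /has_adjacent_onesP [i /andP [E_i E_i1]].
case: (nth_word_of_true E_i) => x xE pos_x; case: (nth_word_of_true E_i1) => y yE pos_y.
have nxy : x != y by apply/eqP => e; move: pos_y; rewrite -e pos_x; lia.
apply/existsP; exists x; apply/existsP; exists y; apply/andP; split.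
  rewrite eq_sym eqEcard card2 cards2 nxy andbT.
  by apply/subsetP => z; rewrite !inE => /orP [] /eqP ->.
by rewrite adj_pos /nat_adj pos_x pos_y eqxx.
Qed.

Lemma nedges_layout : nedges G + size P = nverts G.
Proof.
rewrite nverts_layout /nedges card_set_sum.
rewrite (eq_bigr (fun E => edge_word (word_of E))) => [|E _]; last by rewrite edge_word_of.
rewrite sum_word_of -(size_map size P) sum_blocks_edge_word //.
by apply/allP => _ /mapP [p p_P ->]; case: PD => _ _ ne _; rewrite lt0n size_eq0 ne.
Qed.

Lemma deck_count_layout H k :
  0 < k -> deck_count k G H = sum_blocks (map size P) (deck_term H k).
Proof.
move=> k_gt0; rewrite /deck_count card_set_sum -sum_word_of; apply: eq_bigr => S _.
rewrite /deck_term weight_word_of; case: eqP => //= card_k.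
have [x0 _] : exists x, x \in S by apply/card_gt0P; rewrite card_k.
by rewrite (induced_iso_word_of H S x0).
Qed.

End LinearForestLayout.

Theorem corollary2p5 (k : nat) (G G' : graph) :
  0 < k ->
  linear_forest_minc G k.-1 ->
  linear_forest_minc G' k.-1 ->
  nverts G = nverts G' ->
  nedges G = nedges G' ->
  same_deck k G G'.
Proof.
move=> k_gt0 [P [PD P_ge]] [P' [PD' P'_ge]] eq_n eq_e H.
rewrite (deck_count_layout PD H k_gt0) (deck_count_layout PD' H k_gt0).
apply: sum_blocks_eq; [exact: block_invariant_deck_term | exact: deck_term_bounded | | | |].
- by apply/allP => _ /mapP [p /P_ge le_p ->].
- by apply/allP => _ /mapP [p /P'_ge le_p ->].
- have := nedges_layout PD; have := nedges_layout PD'; rewrite !size_map; lia.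
- by rewrite -(nverts_layout PD) -(nverts_layout PD').
Qed.
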